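(* Let $(\mathcal{B}_1,\mathcal{B}_0)$ be a Rota-Baxter operator on a crossed module of Lie groups $(H,G,t,\Phi)$, and let $\mathcal{C}$ be the small category associated with $(H,G,t,\Phi)$ (see context). Define $R_0:\mathcal{C}_0\times\mathcal{C}_0\to\mathcal{C}_0\times\mathcal{C}_0$ and $R_1:\mathcal{C}_1\times\mathcal{C}_1\to\mathcal{C}_1\times\mathcal{C}_1$ by $$R_0(c,d)=\Big(\mathrm{Ad}_{\mathcal{B}_0(c)}d,\ \mathrm{Ad}_{\mathcal{B}_0(\mathrm{Ad}_{\mathcal{B}_0(c)}d)^{-1}(\mathrm{Ad}_{\mathcal{B}_0(c)}d)^{-1}}\,c\Big),$$ $$R_1(X,Y)=\Big(\mathrm{Ad}_{\mathcal{B}(X)}Y,\ \mathrm{Ad}_{\mathcal{B}(\mathrm{Ad}_{\mathcal{B}(X)}Y)^{-1}(\mathrm{Ad}_{\mathcal{B}(X)}Y)^{-1}}\,X\Big),\quad X,Y\in G\times H,$$ where in $R_0$ the operations are in $G$, in $R_1$ they are in the semi-direct product group $(G\ltimes_\Phi H,\cdot_\Phi)$, $\mathrm{Ad}_gh=ghg^{-1}$, and $\mathcal{B}(a,p)=\big(\mathcal{B}_0(a),\ \Phi(\mathcal{B}_0(a))\mathcal{B}_1(\Phi(\mathcal{B}_0(a)^{-1}a^{-1})p)\big)$. Then $R=(R_1,R_0):\mathcal{C}\times\mathcal{C}\to\mathcal{C}\times\mathcal{C}$ is an invertible functor satisfying $$(R\times\mathrm{Id}_{\mathcal{C}})(\mathrm{Id}_{\mathcal{C}}\times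 R)(R\times\mathrm{Id}_{\mathcal{C}})=(\mathrm{Id}_{\mathcal{C}}\times R)(R\times\mathrm{Id}_{\mathcal{C}})(\mathrm{Id}_{\mathcal{C}}\times R),$$ i.e. $(\mathcal{C},R)$ is a categorical solution of the Yang-Baxter equation.
   Context: A crossed module of Lie groups is a quadruple $(H,G,t,\Phi)$ where $H,G$ are Lie groups, $t:H\to G$ is a Lie group homomorphism and $\Phi:G\to\mathrm{Aut}(H)$ is a smooth action of $G$ on $H$ by automorphisms such that $\Phi(t(p))q=pqp^{-1}$ and $t(\Phi(a)p)=a\,t(p)\,a^{-1}$ for all $p,q\in H$, $a\in G$. A Rota-Baxter operator on a Lie group $G$ is a smooth map $\mathcal{B}:G\to G$ with $\mathcal{B}(a)\mathcal{B}(b)=\mathcal{B}(a\mathcal{B}(a)b\mathcal{B}(a)^{-1})$ for all $a,b\in G$. A Rota-Baxter operator on a crossed module of Lie groups $(H,G,t,\Phi)$ is a pair $(\mathcal{B}_1,\mathcal{B}_0)$ of smooth maps $\mathcal{B}_1:H\to H$, $\mathcal{B}_0:G\to G$ such that (i) $\mathcal{B}_1,\mathcal{B}_0$ are Rota-Baxter operators on $H$, $G$; (ii) $t\circ\mathcal{B}_1=\mathcal{B}_0\circ t$; (iii) $\Phi(\mathcal{B}_0(a))\mathcal{B}_1(p)=\mathcal{B}_1\big(\Phi(a\mathcal{B}_0(a))(p\mathcal{B}_1(p))\cdot\Phi(\mathcal{B}_0(a))\mathcal{B}_1(p)^{-1}\big)$ for all $a\in G,p\in H$. The small category $\mathcal{C}$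 associated with $(H,G,t,\Phi)$: objects $\mathcal{C}_0=G$, morphisms $\mathcal{C}_1=G\times H$, source $\mathfrak{s}(a,p)=a$, target $\mathfrak{t}(a,p)=t(p)a$, composition $(a,p)\circ(b,q)=(b,pq)$ whenever $t(q)b=a$, identities $1_a=(a,e_H)$. The semi-direct product $(G\ltimes_\Phi H,\cdot_\Phi)$ is $G\times H$ with $(a,p)\cdot_\Phi(b,q)=(ab,p\Phi(a)q)$. $\mathcal{C}\times\mathcal{C}$ is the product category. A categorical solution of the Yang-Baxter equation is a pair $(\mathcal{C},R)$ with $\mathcal{C}$ a small category and $R:\mathcal{C}\times\mathcal{C}\to\mathcal{C}\times\mathcal{C}$ an invertible functor satisfying the displayed braid relation. *)

Record grp := Grp {
  carrier :> Type;
  gmul : carrier -> carrier -> carrier;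
  ginv : carrier -> carrier;
  gone : carrier;
  gmulA : forall x y z, gmul x (gmul y z) = gmul (gmul x y) z;
  gmul1l : forall x, gmul gone x = x;
  gmul1r : forall x, gmul x gone = x;
  gmulVl : forall x, gmul (ginv x) x = gone;
  gmulVr : forall x, gmul x (ginv x) = gone
}.

Arguments gmul {g}.
Arguments ginv {g}.
Arguments gone {g}.

Definition Ad {G : grp} (g h : G) : G := gmul (gmul g h) (ginv g).

Definition is_hom {G K : grp} (f : G -> K) : Prop :=
  forall x y, f (gmul x y) = gmul (f x) (f y).

Definition is_bijective {A B : Type} (f : A -> B) : Prop :=
  exists g : B -> A, (forall x, g (f x) = x) /\ (forall y, f (g y) = y).

Definition crossed_module (H G : grp) (t : H -> G) (Phi : G -> H -> H) : Prop :=
  is_hom t /\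
  (forall a : G, is_hom (Phi a) /\ is_bijective (Phi a)) /\
  (forall p : H, Phi gone p = p) /\
  (forall (a b : G) (p : H), Phi (gmul a b) p = Phi a (Phi b p)) /\
  (forall p q : H, Phi (t p) q = gmul (gmul p q) (ginv p)) /\
  (forall (a : G) (p : H), t (Phi a p) = gmul (gmul a (t p)) (ginv a)).

Definition rota_baxter (G : grp) (B : G -> G) : Prop :=
  forall a b : G, gmul (B a) (B b) = B (gmul (gmul (gmul a (B a)) b) (ginv (B a))).

Definition rota_baxter_xmod (H G : grp) (t : H -> G) (Phi : G -> H -> H)
    (B1 : H -> H) (B0 : G -> G) : Prop :=
  rota_baxter H B1 /\ rota_baxter G B0 /\
  (forall p : H, t (B1 p) = B0 (t p)) /\
  (forall (a : G) (p : H),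
     Phi (B0 a) (B1 p) =
     B1 (gmul (Phi (gmul a (B0 a)) (gmul p (B1 p))) (ginv (Phi (B0 a) (B1 p))))).

(* comp f g is the composite "f o g" (first g, then f); it is only
   meaningful when tgt g = src f. *)
Record cat := Cat {
  Ob : Type;
  Mo : Type;
  src : Mo -> Ob;
  tgt : Mo -> Ob;
  idm : Ob -> Mo;
  comp : Mo -> Mo -> Mo
}.

Definition prod_cat (C D : cat) : cat :=
  Cat (Ob C * Ob D) (Mo C * Mo D)
      (fun f => (src C (fst f), src D (snd f)))
      (fun f => (tgt C (fst f), tgt D (snd f)))
      (fun x => (idm C (fst x), idm D (snd x)))
      (fun f g => (comp C (fst f) (fst g), comp D (snd f) (snd g))).

Definition is_functor (C D : cat) (F0 : Ob C -> Ob D) (F1 : Mo C -> Mo D) : Prop :=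
  (forall f, src D (F1 f) = F0 (src C f)) /\
  (forall f, tgt D (F1 f) = F0 (tgt C f)) /\
  (forall x, F1 (idm C x) = idm D (F0 x)) /\
  (forall f g, tgt C g = src C f -> F1 (comp C f g) = comp D (F1 f) (F1 g)).

Definition invertible_functor (C D : cat) (F0 : Ob C -> Ob D) (F1 : Mo C -> Mo D) : Prop :=
  is_functor C D F0 F1 /\
  exists (S0 : Ob D -> Ob C) (S1 : Mo D -> Mo C),
    is_functor D C S0 S1 /\
    (forall x, S0 (F0 x) = x) /\ (forall y, F0 (S0 y) = y) /\
    (forall f, S1 (F1 f) = f) /\ (forall g, F1 (S1 g) = g).

(* (R x Id) and (Id x R) on C x C x C, represented as (C x C) x C *)
Definition RxId {A : Type} (R : A * A -> A * A) (x : (A * A) * A) : (A * A) * A :=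
  (R (fst x), snd x).
Definition IdxR {A : Type} (R : A * A -> A * A) (x : (A * A) * A) : (A * A) * A :=
  let r := R (snd (fst x), snd x) in ((fst (fst x), fst r), snd r).

Definition braid {A : Type} (R : A * A -> A * A) : Prop :=
  forall x, RxId R (IdxR R (RxId R x)) = IdxR R (RxId R (IdxR R x)).

Definition categorical_YBE_solution (C : cat)
    (R0 : Ob C * Ob C -> Ob C * Ob C) (R1 : Mo C * Mo C -> Mo C * Mo C) : Prop :=
  invertible_functor (prod_cat C C) (prod_cat C C) R0 R1 /\ braid R0 /\ braid R1.

Definition xmod_cat (H G : grp) (t : H -> G) : cat :=
  Cat (carrier G) (carrier G * carrier H)
      (fun f => fst f)
      (fun f => gmul (t (snd f)) (fst f))
      (fun a => (a, gone))
      (fun f g => (fst g, gmul (snd f) (snd g))).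

Definition sd_mul (H G : grp) (Phi : G -> H -> H) (X Y : G * H) : G * H :=
  (gmul (fst X) (fst Y), gmul (snd X) (Phi (fst X) (snd Y))).
Definition sd_inv (H G : grp) (Phi : G -> H -> H) (X : G * H) : G * H :=
  (ginv (fst X), Phi (ginv (fst X)) (ginv (snd X))).
Definition sd_Ad (H G : grp) (Phi : G -> H -> H) (X Y : G * H) : G * H :=
  sd_mul H G Phi (sd_mul H G Phi X Y) (sd_inv H G Phi X).

Definition R0_map (G : grp) (B0 : G -> G) (cd : G * G) : G * G :=
  let c := fst cd in let d := snd cd in
  let d' := Ad (B0 c) d in
  (d', Ad (gmul (ginv (B0 d')) (ginv d')) c).

Definition B_sd (H G : grp) (Phi : G -> H -> H) (B1 : H -> H) (B0 : G -> G)
    (X : G * H) : G * H :=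
  let a := fst X in let p := snd X in
  (B0 a, Phi (B0 a) (B1 (Phi (gmul (ginv (B0 a)) (ginv a)) p))).

Definition R1_map (H G : grp) (Phi : G -> H -> H) (B1 : H -> H) (B0 : G -> G)
    (XY : (G * H) * (G * H)) : (G * H) * (G * H) :=
  let X := fst XY in let Y := snd XY in
  let B := B_sd H G Phi B1 B0 in
  let Y' := sd_Ad H G Phi (B X) Y in
  (Y', sd_Ad H G Phi (sd_mul H G Phi (sd_inv H G Phi (B Y')) (sd_inv H G Phi Y')) X).


(* A Rota-Baxter operator B on a group G makes G a skew brace with the
   descendent multiplication a o b = a B(a) b B(a)^-1 and lambda_a = Ad_{B(a)};
   R0 is the Yang-Baxter map of that skew brace, hence bijective and braided.
   Condition (iii) is exactly what makes B a Rota-Baxter operator on the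
   semidirect product G x| H, and R1 is the map built in the same way from it.
   Functoriality of (R1, R0) is naturality of this construction: source and
   target G x| H -> G and identities G -> G x| H are homomorphisms intertwining
   the operators, and so is composition, on the subgroup of composable pairs of
   (G x| H)^2. *)

Section GroupFacts.
Context {G : grp}.
Implicit Types x y z : G.

Lemma mulKg x y : gmul (ginv x) (gmul x y) = y.
Proof. rewrite gmulA, gmulVl, gmul1l. reflexivity. Qed.

Lemma mulKVg x y : gmul x (gmul (ginv x) y) = y.
Proof. rewrite gmulA, gmulVr, gmul1l. reflexivity. Qed.

Lemma mulgI x y z : gmul x y = gmul x z -> y = z.
Proof. intro E. rewrite <- (mulKg x y), <- (mulKg x z), E. reflexivity. Qed.

Lemma mulIg x y z : gmul y x = gmul z x -> y = z.
Proof.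
  intro E. rewrite <- (gmul1r _ y), <- (gmul1r _ z), <- (gmulVr _ x), !gmulA, E.
  reflexivity.
Qed.

Lemma invg_unique x y : gmul x y = gone -> ginv x = y.
Proof. intro E. apply (mulgI x). rewrite gmulVr, E. reflexivity. Qed.

Lemma invgM x y : ginv (gmul x y) = gmul (ginv y) (ginv x).
Proof. apply invg_unique. rewrite <- gmulA, mulKVg, gmulVr. reflexivity. Qed.

Lemma invgK x : ginv (ginv x) = x.
Proof. apply invg_unique, gmulVl. Qed.

Lemma invg1 : ginv (@gone G) = gone.
Proof. apply invg_unique, gmul1l. Qed.

End GroupFacts.

Ltac gsimpl := repeat progress (rewrite ?invgM, ?invgK, ?invg1;
  rewrite <- ?gmulA; rewrite ?mulKg, ?mulKVg, ?gmulVl, ?gmulVr, ?gmul1l, ?gmul1r).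

Section Homomorphisms.
Context {G K : grp}.
Variable f : G -> K.
Hypothesis f_hom : is_hom f.

Lemma hom_one : f gone = gone.
Proof. apply (mulgI (f gone)). rewrite <- f_hom, !gmul1r. reflexivity. Qed.

Lemma hom_inv x : f (ginv x) = ginv (f x).
Proof. symmetry. apply invg_unique. rewrite <- f_hom, gmulVr. exact hom_one. Qed.

End Homomorphisms.

Section RotaBaxterGroup.
Variables (G : grp) (B : G -> G).

(* [rb_circ] is the multiplication of the descendent group of [B]. *)
Definition rb_lambda (a b : G) : G := Ad (B a) b.
Definition rb_circ (a b : G) : G := gmul a (rb_lambda a b).

Lemma rb_lambdaM a x y :
  rb_lambda a (gmul x y) = gmul (rb_lambda a x) (rb_lambda a y).
Proof. unfold rb_lambda, Ad. gsimpl. reflexivity. Qed.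

Lemma rb_lambdaV a x : rb_lambda a (ginv x) = ginv (rb_lambda a x).
Proof. unfold rb_lambda, Ad. gsimpl. reflexivity. Qed.

Lemma rb_lambda_inj a x y : rb_lambda a x = rb_lambda a y -> x = y.
Proof. unfold rb_lambda, Ad. intro E. exact (mulgI _ _ _ (mulIg _ _ _ E)). Qed.

Lemma rb_circ_inj a x y : rb_circ a x = rb_circ a y -> x = y.
Proof. intro E. exact (rb_lambda_inj a _ _ (mulgI _ _ _ E)). Qed.

Lemma R0_map_fst c d : fst (R0_map G B (c, d)) = rb_lambda c d.
Proof. reflexivity. Qed.

Lemma R0_map_circ c d :
  rb_circ (fst (R0_map G B (c, d))) (snd (R0_map G B (c, d))) = rb_circ c d.
Proof. unfold R0_map, rb_circ, rb_lambda, Ad; cbn [fst snd]. gsimpl. reflexivity. Qed.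

Lemma R0_map_spec c d u v : R0_map G B (c, d) = (u, v) ->
  u = rb_lambda c d /\ rb_circ u v = rb_circ c d /\
  rb_lambda u v = gmul (ginv u) (gmul c u).
Proof.
  intro E. pose proof (R0_map_circ c d) as Ec. pose proof (R0_map_fst c d) as Eu.
  rewrite E in Ec, Eu; cbn [fst snd] in Ec, Eu.
  split; [exact Eu | split; [exact Ec|]].
  apply (mulgI u). rewrite mulKVg. change (rb_circ u v = gmul c u).
  rewrite Ec. unfold rb_circ. rewrite <- Eu. reflexivity.
Qed.

Lemma R0_map_eq c d u v :
  u = rb_lambda c d -> rb_circ u v = rb_circ c d -> R0_map G B (c, d) = (u, v).
Proof.
  intros Eu Ev. rewrite <- (R0_map_circ c d) in Ev. rewrite <- R0_map_fst in Eu.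
  rewrite <- Eu in Ev. apply rb_circ_inj in Ev.
  rewrite Eu, Ev. destruct (R0_map G B (c, d)). reflexivity.
Qed.

Definition R0_inv_map (xy : G * G) : G * G :=
  let z := rb_circ (fst xy) (snd xy) in
  let c := gmul z (ginv (fst xy)) in
  (c, Ad (ginv (B c)) (gmul (ginv c) z)).

Lemma R0_inv_mapK cd : R0_inv_map (R0_map G B cd) = cd.
Proof.
  destruct cd as [c d]. unfold R0_inv_map; cbv zeta.
  rewrite R0_map_circ, R0_map_fst. unfold rb_circ, rb_lambda, Ad. gsimpl. reflexivity.
Qed.

Lemma R0_mapK xy : R0_map G B (R0_inv_map xy) = xy.
Proof.
  destruct xy as [x y]. unfold R0_inv_map; cbn [fst snd].
  apply R0_map_eq.
  - unfold rb_lambda, Ad. gsimpl. reflexivity.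
  - unfold rb_circ at 2, rb_lambda, Ad. gsimpl. reflexivity.
Qed.

Hypothesis B_rb : rota_baxter G B.

Lemma rb_circ_B a b : B (rb_circ a b) = gmul (B a) (B b).
Proof. rewrite B_rb. f_equal. unfold rb_circ, rb_lambda, Ad. gsimpl. reflexivity. Qed.

Lemma rb_one : B gone = gone.
Proof. apply (mulgI (B gone)). rewrite B_rb, gmul1r. f_equal. gsimpl. reflexivity. Qed.

(* [B a^-1 a^-1 B a] is the inverse of [a] in the descendent group. *)
Lemma rb_circ_inv a : B (gmul (gmul (ginv (B a)) (ginv a)) (B a)) = ginv (B a).
Proof.
  symmetry. apply invg_unique. rewrite B_rb, <- rb_one. f_equal. gsimpl. reflexivity.
Qed.

Lemma rb_lambda_circ a b c :
  rb_lambda (rb_circ a b) c = rb_lambda a (rb_lambda b c).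
Proof. unfold rb_lambda at 1. rewrite rb_circ_B. unfold rb_lambda, Ad. gsimpl. reflexivity. Qed.

Lemma rb_circA a b c : rb_circ (rb_circ a b) c = rb_circ a (rb_circ b c).
Proof.
  unfold rb_circ at 1. rewrite rb_lambda_circ. unfold rb_circ. rewrite rb_lambdaM.
  gsimpl. reflexivity.
Qed.

Lemma R0_map_braid : braid (R0_map G B).
Proof.
  intros [[a b] c]. unfold RxId, IdxR; cbn [fst snd].
  destruct (R0_map G B (a, b)) as [u1 v1] eqn:E1; cbn [fst snd].
  destruct (R0_map G B (v1, c)) as [u2 v2] eqn:E2; cbn [fst snd].
  destruct (R0_map G B (u1, u2)) as [u3 v3] eqn:E3; cbn [fst snd].
  destruct (R0_map G B (b, c)) as [p1 q1] eqn:F1; cbn [fst snd].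
  destruct (R0_map G B (a, p1)) as [p2 q2] eqn:F2; cbn [fst snd].
  destruct (R0_map G B (q2, q1)) as [p3 q3] eqn:F3; cbn [fst snd].
  apply R0_map_spec in E1 as (e1 & c1 & _), E2 as (e2 & c2 & _),
    E3 as (e3 & c3 & l3), F1 as (f1 & d1 & l1), F2 as (f2 & d2 & _), F3 as (f3 & d3 & _).
  assert (U : u3 = p2).
  { rewrite e3, e2, f2, f1, <- rb_lambda_circ, c1, rb_lambda_circ. reflexivity. }
  assert (V : v3 = p3).
  { apply (rb_lambda_inj u3 v3 p3).
    rewrite l3, f3, U, <- rb_lambda_circ, d2, rb_lambda_circ, l1.
    rewrite !rb_lambdaM, rb_lambdaV, <- f2, <- e1. reflexivity. }
  assert (W : v2 = q3).
  { apply (rb_circ_inj (rb_circ u3 v3) v2 q3).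
    transitivity (rb_circ a (rb_circ b c)).
    - rewrite c3, rb_circA, c2, <- rb_circA, c1, rb_circA. reflexivity.
    - symmetry. rewrite U, V, rb_circA, d3, <- rb_circA, d2, rb_circA, d1. reflexivity. }
  rewrite U, V, W. reflexivity.
Qed.

End RotaBaxterGroup.

Section Naturality.
Variables (K G : grp) (BK : K -> K) (BG : G -> G) (P : K -> Prop) (f : K -> G).
Hypothesis P_mul : forall x y, P x -> P y -> P (gmul x y).
Hypothesis P_inv : forall x, P x -> P (ginv x).
Hypothesis P_B : forall x, P x -> P (BK x).
Hypothesis f_mul : forall x y, P x -> P y -> f (gmul x y) = gmul (f x) (f y).
Hypothesis f_B : forall x, P x -> f (BK x) = BG (f x).

Lemma R0_map_natural x y : P x -> P y ->
  (f (fst (R0_map K BK (x, y))), f (snd (R0_map K BK (x, y)))) = R0_map G BG (f x, f y).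
Proof.
  intros Px Py.
  assert (f_inv : forall z, P z -> f (ginv z) = ginv (f z)).
  { intros z Pz. symmetry. apply invg_unique.
    assert (P1 : P gone) by (rewrite <- (gmulVr _ z); auto).
    rewrite <- f_mul, gmulVr by auto. apply (mulgI (f gone)).
    rewrite gmul1r, <- f_mul, gmul1l by exact P1. reflexivity. }
  unfold R0_map, Ad; cbn [fst snd].
  repeat first
    [ rewrite f_mul by (repeat first [apply P_mul | apply P_inv | apply P_B | assumption])
    | rewrite f_inv by (repeat first [apply P_mul | apply P_inv | apply P_B | assumption])
    | rewrite f_B by (repeat first [apply P_mul | apply P_inv | apply P_B | assumption]) ].
  reflexivity.
Qed.

End Naturality.

Lemma R0_map_hom (K G : grp) (BK : K -> K) (BG : G -> G) (f : K -> G) :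
  is_hom f -> (forall x, f (BK x) = BG (f x)) -> forall x y,
  (f (fst (R0_map K BK (x, y))), f (snd (R0_map K BK (x, y)))) = R0_map G BG (f x, f y).
Proof.
  intros f_hom f_B x y.
  exact (R0_map_natural K G BK BG (fun _ => True) f (fun _ _ _ _ => I) (fun _ _ => I)
           (fun _ _ => I) (fun x y _ _ => f_hom x y) (fun x _ => f_B x) x y I I).
Qed.

Definition prod_grp (K1 K2 : grp) : grp.
Proof.
  refine (Grp (K1 * K2) (fun x y => (gmul (fst x) (fst y), gmul (snd x) (snd y)))
    (fun x => (ginv (fst x), ginv (snd x))) (gone, gone) _ _ _ _ _);
  intros; cbn.
  - rewrite !gmulA. reflexivity.
  - rewrite !gmul1l. destruct x. reflexivity.
  - rewrite !gmul1r. destruct x. reflexivity.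
  - rewrite !gmulVl. reflexivity.
  - rewrite !gmulVr. reflexivity.
Defined.

Lemma functor_inverse (C D : cat) F0 F1 S0 S1 :
  is_functor C D F0 F1 ->
  (forall x, S0 (F0 x) = x) -> (forall y, F0 (S0 y) = y) ->
  (forall f, S1 (F1 f) = f) -> (forall g, F1 (S1 g) = g) ->
  is_functor D C S0 S1.
Proof.
  intros [F_src [F_tgt [F_id F_comp]]] S0K F0K S1K F1K.
  assert (F0_inj : forall x y, F0 x = F0 y -> x = y).
  { intros x y E. rewrite <- (S0K x), <- (S0K y), E. reflexivity. }
  assert (F1_inj : forall f g, F1 f = F1 g -> f = g).
  { intros f g E. rewrite <- (S1K f), <- (S1K g), E. reflexivity. }
  assert (S_src : forall g, src C (S1 g) = S0 (src D g)).
  { intro g. apply F0_inj. rewrite <- F_src, F1K, F0K. reflexivity. }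
  assert (S_tgt : forall g, tgt C (S1 g) = S0 (tgt D g)).
  { intro g. apply F0_inj. rewrite <- F_tgt, F1K, F0K. reflexivity. }
  split; [exact S_src | split; [exact S_tgt | split]].
  - intro x. apply F1_inj. rewrite F_id, F1K, F0K. reflexivity.
  - intros f g E. apply F1_inj. rewrite F_comp, !F1K; [reflexivity|].
    rewrite S_tgt, S_src, E. reflexivity.
Qed.

Section SemidirectProduct.
Variables (H G : grp) (Phi : G -> H -> H).
Hypothesis Phi_hom : forall a, is_hom (Phi a).
Hypothesis Phi_one_act : forall p, Phi gone p = p.
Hypothesis Phi_mul_act : forall a b p, Phi (gmul a b) p = Phi a (Phi b p).

Definition sd_grp : grp.
Proof.
  refine (Grp (G * H) (sd_mul H G Phi) (sd_inv H G Phi) (gone, gone) _ _ _ _ _);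
  unfold sd_mul, sd_inv; intros;
  repeat match goal with x : _ * _ |- _ => destruct x end; cbn.
  - rewrite !gmulA, Phi_hom, Phi_mul_act, !gmulA. reflexivity.
  - rewrite !gmul1l, Phi_one_act. reflexivity.
  - rewrite !gmul1r, hom_one, gmul1r by apply Phi_hom. reflexivity.
  - rewrite gmulVl, <- Phi_hom, gmulVl, hom_one by apply Phi_hom. reflexivity.
  - rewrite gmulVr, <- Phi_mul_act, gmulVr, Phi_one_act, gmulVr. reflexivity.
Defined.

End SemidirectProduct.

Section CrossedModuleRotaBaxter.
Variables (H G : grp) (t : H -> G) (Phi : G -> H -> H) (B1 : H -> H) (B0 : G -> G).
Hypothesis t_hom : is_hom t.
Hypothesis Phi_hom : forall a, is_hom (Phi a).
Hypothesis Phi_one_act : forall p, Phi gone p = p.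
Hypothesis Phi_mul_act : forall a b p, Phi (gmul a b) p = Phi a (Phi b p).
Hypothesis Phi_t : forall p q, Phi (t p) q = gmul (gmul p q) (ginv p).
Hypothesis t_Phi : forall a p, t (Phi a p) = gmul (gmul a (t p)) (ginv a).
Hypothesis B1_rb : rota_baxter H B1.
Hypothesis B0_rb : rota_baxter G B0.
Hypothesis t_B : forall p, t (B1 p) = B0 (t p).
Hypothesis B_Phi : forall a p,
  Phi (B0 a) (B1 p) =
  B1 (gmul (Phi (gmul a (B0 a)) (gmul p (B1 p))) (ginv (Phi (B0 a) (B1 p)))).

Let Phi_mul a p q : Phi a (gmul p q) = gmul (Phi a p) (Phi a q) := Phi_hom a p q.
Let Phi_one a : Phi a gone = gone := hom_one (Phi a) (Phi_hom a).
Let Phi_inv a p : Phi a (ginv p) = ginv (Phi a p) := hom_inv (Phi a) (Phi_hom a) p.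

Ltac psimpl := repeat progress (rewrite ?Phi_mul, ?Phi_inv, ?Phi_one, ?Phi_one_act;
  rewrite <- ?Phi_mul_act; gsimpl).

Let K : grp := sd_grp H G Phi Phi_hom Phi_one_act Phi_mul_act.
Let B : K -> K := B_sd H G Phi B1 B0.

Lemma Phi_invK g p : Phi g (Phi (ginv g) p) = p.
Proof. psimpl. reflexivity. Qed.

Lemma B_sd_twisted a p :
  B_sd H G Phi B1 B0 (a, Phi (gmul a (B0 a)) p) = (B0 a, Phi (B0 a) (B1 p)).
Proof. unfold B_sd; cbn [fst snd]. psimpl. reflexivity. Qed.

(* Condition (iii) at the descendent-group inverse of [b], whose image under
   [B0] is [B0 b]^-1, combined with the Rota-Baxter identity for [B1]. *)
Lemma B1_mul_twisted b p q :
  gmul (Phi (ginv (B0 b)) (B1 p)) (B1 q) =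
  B1 (gmul (Phi (ginv (gmul b (B0 b))) (gmul p (B1 p)))
        (gmul q (ginv (Phi (ginv (B0 b)) (B1 p))))).
Proof.
  set (m := Phi (ginv (B0 b)) (B1 p)).
  assert (Em : m = B1 (gmul (Phi (ginv (gmul b (B0 b))) (gmul p (B1 p))) (ginv m))).
  { pose proof (B_Phi (gmul (gmul (ginv (B0 b)) (ginv b)) (B0 b)) p) as E.
    rewrite (rb_circ_inv _ _ B0_rb) in E. unfold m at 1. rewrite E.
    f_equal. psimpl. reflexivity. }
  set (y := gmul (Phi (ginv (gmul b (B0 b))) (gmul p (B1 p))) (ginv m)) in Em.
  rewrite Em, B1_rb, <- Em. f_equal. unfold y. gsimpl. reflexivity.
Qed.

Lemma B_sd_rb : rota_baxter K B.
Proof.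
  intros [a p] [b q]. cbn [K sd_grp gmul ginv].
  rewrite <- (Phi_invK (gmul a (B0 a)) p), <- (Phi_invK (gmul b (B0 b)) q).
  generalize (Phi (ginv (gmul a (B0 a))) p) as p'; intro p'.
  generalize (Phi (ginv (gmul b (B0 b))) q) as q'; intro q'.
  unfold B. rewrite !B_sd_twisted.
  unfold B_sd, sd_mul, sd_inv; cbn [fst snd]. rewrite <- B0_rb.
  f_equal.
  transitivity (Phi (gmul (B0 a) (B0 b)) (gmul (Phi (ginv (B0 b)) (B1 p')) (B1 q'))).
  - psimpl. reflexivity.
  - rewrite B1_mul_twisted. psimpl. reflexivity.
Qed.

Let C : cat := xmod_cat H G t.

Lemma tgt_sd_mul (X Y : K) : tgt C (gmul X Y) = gmul (tgt C X) (tgt C Y).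
Proof.
  destruct X as [a p], Y as [b q]. cbn; unfold sd_mul; cbn [fst snd].
  rewrite t_hom, t_Phi. gsimpl. reflexivity.
Qed.

Lemma tgt_sd_inv (X : K) : tgt C (ginv X) = ginv (tgt C X).
Proof.
  destruct X as [a p]. cbn; unfold sd_inv; cbn [fst snd].
  rewrite t_Phi, (hom_inv t t_hom). gsimpl. reflexivity.
Qed.

Lemma tgt_B_sd (X : K) : tgt C (B X) = B0 (tgt C X).
Proof.
  destruct X as [a p]. cbn; unfold B, B_sd; cbn [fst snd].
  rewrite t_Phi, t_B, t_Phi, <- gmulA, gmulVl, gmul1r, B0_rb. f_equal. gsimpl. reflexivity.
Qed.

Lemma B_sd_idm a : B (idm C a) = idm C (B0 a).
Proof.
  cbn; unfold B, B_sd; cbn [fst snd]. rewrite Phi_one, (rb_one _ _ B1_rb), Phi_one.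
  reflexivity.
Qed.

Lemma sd_mul_idm a b : gmul (idm C a : K) (idm C b) = idm C (gmul a b).
Proof. cbn; unfold sd_mul; cbn [fst snd]. rewrite Phi_one, gmul1l. reflexivity. Qed.

Definition composable (fg : prod_grp K K) : Prop := tgt C (snd fg) = src C (fst fg).

Definition comp_pair (fg : prod_grp K K) : K := comp C (fst fg) (snd fg).

Lemma comp_pair_mul fg1 fg2 : composable fg1 ->
  comp_pair (gmul fg1 fg2) = gmul (comp_pair fg1) (comp_pair fg2).
Proof.
  destruct fg1 as [[a1 p1] [b1 q1]], fg2 as [[a2 p2] [b2 q2]].
  unfold composable, comp_pair; cbn; unfold sd_mul; cbn [fst snd]. intros <-.
  rewrite Phi_mul_act, Phi_t, Phi_mul. gsimpl. reflexivity.
Qed.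

Lemma comp_pair_B fg : composable fg ->
  comp_pair (B (fst fg), B (snd fg)) = B (comp_pair fg).
Proof.
  destruct fg as [[a p] [b q]].
  unfold composable, comp_pair, B; cbn [C xmod_cat comp tgt src fst snd]. intros <-.
  rewrite <- (Phi_invK (gmul b (B0 b)) q).
  generalize (Phi (ginv (gmul b (B0 b))) q) as q'; intro q'.
  assert (Ea : B0 (gmul (t (Phi (gmul b (B0 b)) q')) b) = gmul (B0 b) (t (B1 q'))).
  { rewrite t_Phi, t_B, B0_rb. f_equal. gsimpl. reflexivity. }
  assert (Eaa : gmul (gmul (t (Phi (gmul b (B0 b)) q')) b) (gmul (B0 b) (t (B1 q')))
                = gmul (gmul b (B0 b)) (t (gmul q' (B1 q')))).
  { rewrite t_Phi, t_hom. gsimpl. reflexivity. }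
  rewrite <- (Phi_invK (gmul (gmul b (B0 b)) (t (gmul q' (B1 q')))) p).
  generalize (Phi (ginv (gmul (gmul b (B0 b)) (t (gmul q' (B1 q'))))) p) as p'; intro p'.
  rewrite B_sd_twisted. unfold B_sd; cbn [fst snd]. rewrite Ea, <- invgM, Eaa. f_equal.
  transitivity (Phi (B0 b) (gmul (B1 q') (B1 p'))).
  - rewrite Phi_mul_act, Phi_t. psimpl. reflexivity.
  - rewrite B1_rb. psimpl. rewrite Phi_t. gsimpl. reflexivity.
Qed.

Lemma composable_mul fg1 fg2 :
  composable fg1 -> composable fg2 -> composable (gmul fg1 fg2).
Proof.
  unfold composable. intros E1 E2. cbn [prod_grp gmul snd].
  rewrite tgt_sd_mul, E1, E2. reflexivity.
Qed.

Lemma composable_inv fg : composable fg -> composable (ginv fg).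
Proof.
  unfold composable. intro E. cbn [prod_grp ginv snd]. rewrite tgt_sd_inv, E. reflexivity.
Qed.

Lemma composable_B fg : composable fg -> composable (B (fst fg), B (snd fg)).
Proof. unfold composable. intro E. cbn [snd]. rewrite tgt_B_sd, E. reflexivity. Qed.

Lemma R1_map_braid : braid (R1_map H G Phi B1 B0).
Proof. exact (R0_map_braid K B B_sd_rb). Qed.

Lemma R_functor :
  is_functor (prod_cat C C) (prod_cat C C) (R0_map G B0) (R1_map H G Phi B1 B0).
Proof.
  split; [|split; [|split]].
  - intros [f g]. exact (R0_map_hom K G B B0 (src C) (fun _ _ => eq_refl) (fun _ => eq_refl) f g).
  - intros [f g]. exact (R0_map_hom K G B B0 (tgt C) tgt_sd_mul tgt_B_sd f g).
  - intros [a b]. symmetry.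
    exact (R0_map_hom G K B0 B (idm C) (fun a b => eq_sym (sd_mul_idm a b))
             (fun a => eq_sym (B_sd_idm a)) a b).
  - intros [f1 f2] [g1 g2] E. injection E; intros E2 E1. symmetry.
    exact (R0_map_natural (prod_grp K K) K (fun fg => (B (fst fg), B (snd fg))) B
             composable comp_pair composable_mul composable_inv composable_B
             (fun fg1 fg2 E1 _ => comp_pair_mul fg1 fg2 E1) comp_pair_B
             (f1, g1) (f2, g2) E1 E2).
Qed.

Lemma R_invertible :
  invertible_functor (prod_cat C C) (prod_cat C C) (R0_map G B0) (R1_map H G Phi B1 B0).
Proof.
  split; [exact R_functor|].
  exists (R0_inv_map G B0), (R0_inv_map K B).
  assert (S0K := R0_inv_mapK G B0). assert (R0K := R0_mapK G B0).
  assert (S1K := R0_inv_mapK K B). assert (R1K := R0_mapK K B).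
  split; [apply (functor_inverse _ _ _ _ _ _ R_functor); assumption|].
  split; [exact S0K | split; [exact R0K | split; [exact S1K | exact R1K]]].
Qed.

End CrossedModuleRotaBaxter.

Theorem theorem3p3 (H G : grp) (t : H -> G) (Phi : G -> H -> H)
    (B1 : H -> H) (B0 : G -> G)
    (hX : crossed_module H G t Phi)
    (hB : rota_baxter_xmod H G t Phi B1 B0) :
  categorical_YBE_solution (xmod_cat H G t)
    (R0_map G B0) (R1_map H G Phi B1 B0).
Proof.
  destruct hX as (t_hom & Phi_aut & Phi_one_act & Phi_mul_act & Phi_t & t_Phi).
  destruct hB as (B1_rb & B0_rb & t_B & B_Phi).
  assert (Phi_hom : forall a, is_hom (Phi a)) by (intro a; apply Phi_aut).
  split; [|split].
  - apply R_invertible; assumption.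
  - apply R0_map_braid; assumption.
  - apply R1_map_braid; assumption.
Qed.
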